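(* For $\theta\in(0,1)$ define $P_0(\theta)=1-\theta$ and, for integers $r\ge 1$, \[ P_r(\theta)=r(1-\theta)\sum_{i=r}^{\infty}\frac{\theta^i}{i}. \] Then for each $r\ge 1$, the points $\theta\in(0,1)$ at which $P_{r-1}(\theta)=P_r(\theta)$ are exactly the points at which $\frac{d}{d\theta}P_r(\theta)=0$; that is, the intersection of $P_{r-1}$ and $P_r$ coincides with the location of the maximum value of $P_r$ on $(0,1)$. *)

From Stdlib Require Import Reals Lra Lia.
From Coquelicot Require Import Coquelicot.
Open Scope R_scope.

Definition tail_term (r : nat) (theta : R) (i : nat) : R :=
  if (i <? r)%nat then 0 else theta ^ i / INR i.

Definition P (r : nat) (theta : R) : R :=
  match r with
  | O => 1 - theta
  | S _ => INR r * (1 - theta) * Series (tail_term r theta)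
  end.

(** Write [S_r(t) = sum_{i >= r} t^i / i], so that [P_r = r (1 - t) S_r] for [r >= 1].
    Differentiating the power series termwise gives the geometric tail
    [S_r' = t^(r-1) / (1 - t)], hence [P_r' = r (t^(r-1) - S_r)].  On the other hand
    [S_(r-1) = t^(r-1)/(r-1) + S_r] gives [P_(r-1) - P_r = (1 - t) (t^(r-1) - S_r)].
    Both quantities are nonzero multiples of [t^(r-1) - S_r] on [(0,1)], so they
    vanish at the same points. *)

From Stdlib Require Import Reals Lra Lia.
From Coquelicot Require Import Coquelicot.
Open Scope R_scope.

Definition tail_coef (r n : nat) : R := if (n <? r)%nat then 0 else / INR n.

Lemma tail_term_pow r x n : tail_term r x n = tail_coef r n * x ^ n.
Proof. unfold tail_term, tail_coef. destruct (n <? r)%nat; unfold Rdiv; ring. Qed.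

Lemma tail_term_lt r x n : (n < r)%nat -> tail_term r x n = 0.
Proof. intros Hn. unfold tail_term. apply Nat.ltb_lt in Hn. now rewrite Hn. Qed.

Lemma tail_term_ge r x n : (r <= n)%nat -> tail_term r x n = x ^ n / INR n.
Proof. intros Hn. unfold tail_term. apply Nat.ltb_ge in Hn. now rewrite Hn. Qed.

(* For [n = 0] the coefficient is [/ 0], which is [0] in Rocq. *)
Lemma Rabs_tail_coef_le_1 r n : Rabs (tail_coef r n) <= 1.
Proof.
  unfold tail_coef. destruct (n <? r)%nat.
  - rewrite Rabs_R0. lra.
  - destruct n as [|n].
    + simpl INR. rewrite Rinv_0, Rabs_R0. lra.
    + assert (Hn : 1 <= INR (S n)) by (apply (le_INR 1); lia).
      rewrite Rabs_pos_eq by (left; apply Rinv_0_lt_compat; lra).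
      rewrite <- Rinv_1. apply Rinv_le_contravar; lra.
Qed.

Lemma CV_radius_tail_coef r x : Rabs x < 1 -> Rbar_lt (Rabs x) (CV_radius (tail_coef r)).
Proof.
  intros Hx.
  set (y := (Rabs x + 1) / 2).
  assert (Hy : 0 <= y <= 1) by (pose proof (Rabs_pos x); unfold y; lra).
  assert (Hbounded : exists M, forall n, Rabs (tail_coef r n * y ^ n) <= M).
  { exists 1. intros n.
    rewrite Rabs_mult, (Rabs_pos_eq (y ^ n)) by (apply pow_le; lra).
    assert (Hyn : y ^ n <= 1) by (rewrite <- (pow1 n); apply pow_incr; lra).
    pose proof (Rabs_tail_coef_le_1 r n). pose proof (Rabs_pos (tail_coef r n)).
    pose proof (pow_le y n (proj1 Hy)). nra. }
  apply Rbar_lt_le_trans with (Finite y).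
  - simpl. unfold y. lra.
  - apply (proj1 (CV_radius_bounded (tail_coef r))). exact Hbounded.
Qed.

Lemma ex_series_tail_term r x : Rabs x < 1 -> ex_series (tail_term r x).
Proof.
  intros Hx.
  apply ex_series_ext with (fun n => scal (x ^ n) (tail_coef r n)).
  { intros n. rewrite tail_term_pow. unfold scal; simpl; unfold mult; simpl. ring. }
  apply CV_radius_inside, CV_radius_tail_coef, Hx.
Qed.

Lemma Series_tail_term_S r x : Rabs x < 1 ->
  Series (tail_term r x) = x ^ r / INR r + Series (tail_term (S r) x).
Proof.
  intros Hx.
  rewrite (Series_incr_n_aux (tail_term r x) r) by (intros; now apply tail_term_lt).
  rewrite (Series_incr_n_aux (tail_term (S r) x) (S r)) by (intros; now apply tail_term_lt).
  rewrite Series_incr_1 by (apply ex_series_incr_n, ex_series_tail_term, Hx).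
  rewrite Nat.add_0_r, tail_term_ge by lia.
  f_equal. apply Series_ext. intros k.
  rewrite <- plus_n_Sm, !tail_term_ge by lia. reflexivity.
Qed.

Lemma is_series_geom_tail m x : Rabs x < 1 ->
  is_series (fun n => if (n <? m)%nat then 0 else x ^ n) (x ^ m / (1 - x)).
Proof.
  intros Hx. assert (1 - x <> 0) by (apply Rabs_lt_between in Hx; lra).
  induction m as [|m IHm].
  - apply is_series_ext with (fun n => x ^ n); [reflexivity|].
    replace (x ^ 0 / (1 - x)) with (/ (1 - x)) by (simpl; field; assumption).
    apply is_series_geom, Hx.
  - apply is_series_decr_1.
    match goal with |- is_series _ ?l => replace l with (x * (x ^ m / (1 - x))) end;
      [|simpl; unfold plus, opp; simpl; field; assumption].
    apply is_series_ext with (fun n => scal x (if (n <? m)%nat then 0 else x ^ n));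
      [|exact (is_series_scal_l x _ _ IHm)].
    intros n. unfold scal; simpl; unfold mult; simpl.
    change (S n <? S m)%nat with (n <? m)%nat. destruct (n <? m)%nat; ring.
Qed.

(* The termwise derivative of [sum_(n >= m+1) t^n / n] is the geometric tail from [m]. *)
Lemma is_derive_Series_tail_term m x : Rabs x < 1 ->
  is_derive (fun t => Series (tail_term (S m) t)) x (x ^ m / (1 - x)).
Proof.
  intros Hx.
  apply is_derive_ext with (PSeries (tail_coef (S m))).
  { intros t. apply Series_ext. intros n. rewrite tail_term_pow.
    unfold scal; simpl; unfold mult; simpl. ring. }
  replace (x ^ m / (1 - x)) with (PSeries (PS_derive (tail_coef (S m))) x).
  { apply is_derive_PSeries, CV_radius_tail_coef, Hx. }
  apply is_series_unique.
  apply is_series_ext with (fun n => if (n <? m)%nat then 0 else x ^ n);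
    [|apply is_series_geom_tail, Hx].
  intros n. unfold PS_derive, tail_coef.
  change (S n <? S m)%nat with (n <? m)%nat.
  unfold scal, mult. destruct (n <? m)%nat; cbn -[INR].
  - ring.
  - field. apply not_0_INR. lia.
Qed.

Lemma is_derive_P_S m x : Rabs x < 1 ->
  is_derive (P (S m)) x (INR (S m) * (x ^ m - Series (tail_term (S m) x))).
Proof.
  intros Hx. assert (1 - x <> 0) by (apply Rabs_lt_between in Hx; lra).
  apply is_derive_ext with (fun t => (INR (S m) * (1 - t)) * Series (tail_term (S m) t));
    [reflexivity|].
  replace (INR (S m) * (x ^ m - Series (tail_term (S m) x)))
    with (- INR (S m) * Series (tail_term (S m) x)
          + INR (S m) * (1 - x) * (x ^ m / (1 - x))) by (field; assumption).
  apply (is_derive_mult (fun t => INR (S m) * (1 - t)) (fun t => Series (tail_term (S m) t)));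
    [|apply is_derive_Series_tail_term, Hx|exact Rmult_comm].
  auto_derive; [exact I | change (INR (S m) * - (1) = - INR (S m)); ring].
Qed.

Lemma P_sub_P_S m x : Rabs x < 1 ->
  P m x - P (S m) x = (1 - x) * (x ^ m - Series (tail_term (S m) x)).
Proof.
  intros Hx. destruct m as [|m].
  - simpl. ring.
  - unfold P. rewrite (Series_tail_term_S (S m) x Hx), (S_INR (S m)).
    field. apply not_0_INR. lia.
Qed.

Theorem lemma3p1 (r : nat) (hr : (1 <= r)%nat) (theta : R)
  (h0 : 0 < theta) (h1 : theta < 1) :
  P (r - 1) theta = P r theta <-> is_derive (P r) theta 0.
Proof.
  destruct r as [|m]; [lia|].
  replace (S m - 1)%nat with m by lia.
  assert (Htheta : Rabs theta < 1) by (rewrite Rabs_pos_eq; lra).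
  pose proof (P_sub_P_S m theta Htheta) as Hdiff.
  pose proof (is_derive_P_S m theta Htheta) as Hderiv.
  assert (Hm : INR (S m) <> 0) by (apply not_0_INR; lia).
  set (gap := theta ^ m - Series (tail_term (S m) theta)) in *.
  transitivity (gap = 0).
  - split; intros H.
    + assert (Hprod : (1 - theta) * gap = 0) by lra.
      apply Rmult_integral in Hprod as [Hprod|Hprod]; [lra | exact Hprod].
    + rewrite H, Rmult_0_r in Hdiff. lra.
  - split; intros H.
    + rewrite H, Rmult_0_r in Hderiv. exact Hderiv.
    + apply is_derive_unique in H. apply is_derive_unique in Hderiv.
      rewrite H in Hderiv.
      apply eq_sym, Rmult_integral in Hderiv as [Hderiv|Hderiv]; [contradiction | exact Hderiv].
Qed.
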